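(* Let $n,r\geq 1$ and $0\le k\le n$. Then \[ \mathcal{S}_{r}\Lambda^k(\mathbb{R}^n)\subset \mathcal{S}_{r+1}^-\Lambda^k(\mathbb{R}^n)\subset \mathcal{S}_{r+1}\Lambda^k(\mathbb{R}^n). \]
   Context: Fix $n\ge1$. For a multi-index $\alpha\in\mathbb{N}^n$ (nonnegative integers) and a subset $\sigma=\{\sigma(1)<\dots<\sigma(k)\}\subset\{1,\dots,n\}$, the form monomial is $x^\alpha dx_\sigma:=x_1^{\alpha_1}\cdots x_n^{\alpha_n}\,dx_{\sigma(1)}\wedge\cdots\wedge dx_{\sigma(k)}$, of degree $|\alpha|=\sum_i\alpha_i$. $\mathcal{H}_r\Lambda^k(\mathbb{R}^n)$ is the span of form monomials with $|\alpha|=r$, $|\sigma|=k$ (it is $0$ if $r<0$ or $k\notin\{0,\dots,n\}$), and $\mathcal{P}_r\Lambda^k:=\bigoplus_{j=0}^r\mathcal{H}_j\Lambda^k$ ($=0$ if $r<0$). $d$ is the exterior derivative. The Koszul operator $\kappa$ is defined on monomials by $\kappa(x^\alpha dx_\sigma)=\sum_{i=1}^k(-1)^{i+1}x^\alpha x_{\sigma(i)}\,dx_{\sigma(1)}\wedge\cdots\wedge\widehat{dx_{\sigma(i)}}\wedge\cdots\wedge dx_{\sigma(k)}$ (hat = omitted) and extended linearly. The linear degree of a form monomial is $\mathrm{ldeg}(x^\alpha dx_\sigma):=\#\{i\notin\sigma:\alpha_i=1\}$, and $\mathcal{H}_{r,l}\Lambda^k(\mathbb{R}^n)$ is the span of the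 form monomials in $\mathcal{H}_r\Lambda^k$ with linear degree $\ge l$. Define $\mathcal{J}_r\Lambda^k(\mathbb{R}^n):=\sum_{l\ge1}\kappa\,\mathcal{H}_{r+l-1,l}\Lambda^{k+1}(\mathbb{R}^n)$. The serendipity space is $\mathcal{S}_r\Lambda^k(\mathbb{R}^n):=\mathcal{P}_r\Lambda^k+\mathcal{J}_r\Lambda^k+d\,\mathcal{J}_{r+1}\Lambda^{k-1}$ (this sum is direct; forms of degree $-1$ or $n+1$ are $0$). For $r\ge1$ the trimmed serendipity space is $\mathcal{S}_r^-\Lambda^k(\mathbb{R}^n):=\mathcal{S}_{r-1}\Lambda^k(\mathbb{R}^n)+\kappa\,\mathcal{S}_{r-1}\Lambda^{k+1}(\mathbb{R}^n)$. *)

(* Polynomial differential forms on R^n, coefficients in a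
   real field R, represented by their coefficient function: a form is the
   map (alpha, sigma) |-> coefficient of x^alpha dx_sigma. *)
From HB Require Import structures.
From mathcomp Require Import all_boot all_order all_algebra.
Set Implicit Arguments. Unset Strict Implicit. Unset Printing Implicit Defensive.
Import Order.TTheory GRing.Theory Num.Theory.
Local Open Scope ring_scope.

Definition mindex (n : nat) := 'I_n -> nat.

Definition pform (R : nzRingType) (n : nat) := mindex n -> {set 'I_n} -> R.

Definition mdeg n (a : mindex n) : nat := (\sum_(i < n) a i)%N.

Definition ldeg n (a : mindex n) (s : {set 'I_n}) : nat :=
  #|[set i : 'I_n | (i \notin s) && (a i == 1%N)]|.

Definition addE n (a : mindex n) (j : 'I_n) : mindex n :=
  fun i => if i == j then (a i).+1 else a i.
Definition subE n (a : mindex n) (j : 'I_n) : mindex n :=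
  fun i => if i == j then (a i).-1 else a i.

Definition sgn (R : nzRingType) n (s : {set 'I_n}) (j : 'I_n) : R :=
  (-1) ^+ #|[set l in s | (l < j)%N]|.

(* Koszul operator, coefficientwise:
   kappa(x^a dx_s) = sum_i (-1)^(i+1) x^a x_{s(i)} dx_{s \ s(i)} *)
Definition kappa (R : nzRingType) n (w : pform R n) : pform R n :=
  fun b t => \sum_(j < n | (j \notin t) && (0 < b j)%N)
               sgn R t j * w (subE b j) (j |: t).

(* exterior derivative, coefficientwise:
   d(x^a dx_s) = sum_{j} a_j x^(a - e_j) dx_j /\ dx_s *)
Definition dext (R : nzRingType) n (w : pform R n) : pform R n :=
  fun b t => \sum_(j < n | j \in t)
               (b j).+1%:R * sgn R t j * w (addE b j) (t :\ j).

Definition fzero (R : nzRingType) n (w : pform R n) : Prop :=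
  forall a s, w a s = 0.

Definition inH (R : nzRingType) n (r l k : nat) (w : pform R n) : Prop :=
  forall a s, w a s != 0 -> [/\ mdeg a = r, #|s| = k & (l <= ldeg a s)%N].

Definition inP (R : nzRingType) n (r k : nat) (w : pform R n) : Prop :=
  forall a s, w a s != 0 -> (mdeg a <= r)%N /\ #|s| = k.

(* w in J_r Lambda^k = sum_{l >= 1} kappa H_{r+l-1,l} Lambda^{k+1}
   (a sum of subspaces: finite sums of elements) *)
Definition inJ (R : nzRingType) n (r k : nat) (w : pform R n) : Prop :=
  exists (m : nat) (f : nat -> pform R n),
    (forall l, (1 <= l <= m)%N -> inH (r + l).-1 l k.+1 (f l)) /\
    (forall a s, w a s = \sum_(1 <= l < m.+1) kappa (f l) a s).

(* w in S_r Lambda^k = P_r Lambda^k + J_r Lambda^k + d J_{r+1} Lambda^{k-1}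
   (the last summand is 0 when k = 0) *)
Definition inS (R : nzRingType) n (r k : nat) (w : pform R n) : Prop :=
  exists (p j g : pform R n),
    [/\ inP r k p, inJ r k j,
        (if k is k'.+1 then inJ r.+1 k' g else fzero g) &
        forall a s, w a s = p a s + j a s + dext g a s].

(* w in S^-_r Lambda^k = S_{r-1} Lambda^k + kappa S_{r-1} Lambda^{k+1}
   (only meaningful for r >= 1) *)
Definition inStrim (R : nzRingType) n (r k : nat) (w : pform R n) : Prop :=
  exists (u v : pform R n),
    [/\ inS r.-1 k u, inS r.-1 k.+1 v &
        forall a s, w a s = u a s + kappa v a s].

(* The first inclusion is immediate: take the Koszul part to be 0.  For the
   second, S_r <= S_(r+1) because J_r <= H_(r+1) + J_(r+1), and
   kappa S_r Lambda^(k+1) <= S_(r+1) Lambda^k: kappa maps P_r into P_(r+1),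
   kills J_r since kappa kappa = 0, and on d J_(r+1) the homotopy formula
   kappa d + d kappa = (polynomial degree + form degree) gives
   kappa d (kappa f) = (deg + k) kappa f, which stays in J_(r+1). *)
From mathcomp Require Import all_boot all_order all_algebra.
From mathcomp Require Import ring.
From Stdlib Require Import FunctionalExtensionality.
Set Implicit Arguments. Unset Strict Implicit. Unset Printing Implicit Defensive.
Import GRing.Theory.
Local Open Scope ring_scope.

Lemma sum_antisym_eq0 (V : zmodType) m (H : 'I_m -> 'I_m -> V) :
  (forall i, H i i = 0) -> (forall i j, H i j = - H j i) ->
  \sum_i \sum_j H i j = 0.
Proof.
move=> H0 HN.
have -> : \sum_i \sum_j H i j =
    \sum_(i < m) \sum_(j < m) (if (j < i)%N then H i j else 0) +
    \sum_(i < m) \sum_(j < m) (if (i < j)%N then H i j else 0).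
  rewrite -big_split; apply: eq_bigr => i _; rewrite -big_split; apply: eq_bigr => j _ /=.
  by case: ltngtP => [||/val_inj ->]; rewrite ?addr0 ?add0r ?H0.
rewrite [X in _ + X]exchange_big /=.
apply/eqP; rewrite addr_eq0 -sumrN; apply/eqP; apply: eq_bigr => i _.
rewrite -sumrN; apply: eq_bigr => j _.
by case: ifP => _; rewrite ?oppr0 // HN.
Qed.

Section Forms.
Variables (R : comNzRingType) (n : nat).
Implicit Types (u v w : pform R n) (b : mindex n) (t : {set 'I_n}) (i j : 'I_n).

Lemma sgn_setU1 t i j :
  j \notin t -> sgn R (j |: t) i = (-1) ^+ (j < i)%N * sgn R t i.
Proof.
move=> jt; rewrite /sgn -exprD; congr (_ ^+ _).
case: (ltnP j i) => ji.
  have -> : [set l in j |: t | (l < i)%N] = j |: [set l in t | (l < i)%N].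
    by apply/setP => l; rewrite !inE; case: eqVneq => [->|]; rewrite ?ji ?orbT.
  by rewrite cardsU1 inE (negbTE jt).
rewrite add0n; apply: eq_card => l; rewrite !inE.
by case: eqVneq => [->|] //=; rewrite ltnNge ji andbF.
Qed.

Lemma sgn_setD1 t i j :
  i \in t -> sgn R t j = (-1) ^+ (i < j)%N * sgn R (t :\ i) j.
Proof. by move=> it; rewrite -sgn_setU1 ?setD1K // !inE eqxx. Qed.

Lemma sgn_setU1_id t j : j \notin t -> sgn R (j |: t) j = sgn R t j.
Proof. by move=> jt; rewrite sgn_setU1 // ltnn mul1r. Qed.

Lemma sgn_setD1_id t j : j \in t -> sgn R (t :\ j) j = sgn R t j.
Proof. by move=> jt; rewrite (sgn_setD1 _ jt) ltnn mul1r. Qed.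

Lemma mul_sgn t j : sgn R t j * sgn R t j = 1.
Proof. by rewrite -exprMn mulrNN mul1r expr1n. Qed.

Lemma sign_ltn_swap i j :
  i != j -> (-1) ^+ (j < i)%N = - (-1) ^+ (i < j)%N :> R.
Proof.
move=> ij; case: ltngtP => [_|_|/val_inj eq_ij]; rewrite ?opprK //.
by rewrite eq_ij eqxx in ij.
Qed.

Lemma subEC b i j : subE (subE b j) i = subE (subE b i) j.
Proof.
apply: functional_extensionality => l; rewrite /subE.
by case: (eqVneq l i) => [->|]; case: eqVneq => // ->.
Qed.

Lemma subEK b j : (0 < b j)%N -> addE (subE b j) j = b.
Proof.
move=> bj; apply: functional_extensionality => l; rewrite /subE /addE.
by case: eqVneq => [->|] //; rewrite prednK.
Qed.

Lemma addEK b j : subE (addE b j) j = b.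
Proof.
apply: functional_extensionality => l; rewrite /subE /addE.
by case: eqVneq => [->|].
Qed.

Lemma addE_subEC b i j : i != j -> addE (subE b j) i = subE (addE b i) j.
Proof.
move=> ij; apply: functional_extensionality => l; rewrite /subE /addE.
by case: (eqVneq l i) => [->|//]; rewrite (negbTE ij).
Qed.

Lemma subE_neq b i j : i != j -> subE b j i = b i.
Proof. by rewrite /subE => /negbTE ->. Qed.

Lemma addE_neq b i j : i != j -> addE b j i = b i.
Proof. by rewrite /addE => /negbTE ->. Qed.

Lemma kappa_kappa w b t : kappa (kappa w) b t = 0.
Proof.
pose P j i := [&& j \notin t, (0 < b j)%N, i \notin t, (0 < b i)%N & i != j].
pose H j i := if P j i then sgn R t j * sgn R (j |: t) i *
  w (subE (subE b j) i) (i |: (j |: t)) else 0.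
have -> : kappa (kappa w) b t = \sum_j \sum_i H j i.
  rewrite /kappa big_mkcond /=; apply: eq_bigr => j _.
  case: (boolP ((j \notin t) && (0 < b j)%N)) => /= [/andP[jt bj]|hj].
    rewrite mulr_sumr big_mkcond /=; apply: eq_bigr => i _.
    rewrite /H /P jt bj /= !inE negb_or.
    case: (eqVneq i j) => [->|ij] /=; first by rewrite !andbF.
    by rewrite (subE_neq b ij) andbT; case: ifP => // _; rewrite mulrA.
  rewrite big1 // => i _; rewrite /H /P.
  by move: hj; case: (j \notin t); case: (0 < b j)%N.
apply: sum_antisym_eq0 => [j|i j]; rewrite /H; first by rewrite /P eqxx !andbF.
have -> : P i j = P j i.
  rewrite /P eq_sym.
  by case: (i \notin t); case: (j \notin t); case: (0 < b i)%N; case: (0 < b j)%N.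
case Pji: (P j i); last by rewrite oppr0.
move: Pji => /and5P[jt bj it bi ij].
by rewrite subEC setUCA !sgn_setU1 // (sign_ltn_swap ij); ring.
Qed.

Definition kappa_dext_cross w b t j i := sgn R t j * ((subE b j i).+1%:R *
  sgn R (j |: t) i * w (addE (subE b j) i) ((j |: t) :\ i)).

Definition dext_kappa_cross w b t i j := (b i).+1%:R * sgn R t i *
  (sgn R (t :\ i) j * w (subE (addE b i) j) (j |: (t :\ i))).

Lemma kappa_dextE w b t : kappa (dext w) b t =
  \sum_(j | (j \notin t) && (0 < b j)%N) (b j)%:R * w b t +
  \sum_(j | (j \notin t) && (0 < b j)%N) \sum_(i in t) kappa_dext_cross w b t j i.
Proof.
rewrite /kappa -big_split /=; apply: eq_bigr => j /andP[jt bj].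
rewrite /dext (bigD1 j) ?setU11 //= mulrDr mulr_sumr; congr (_ + _).
  rewrite /subE eqxx prednK // sgn_setU1_id // subEK // setU1K //.
  by rewrite [_ * sgn R t j]mulrC !mulrA mul_sgn mul1r.
apply: eq_bigl => i /=; rewrite in_setU1.
by case: (eqVneq i j) => [->|] /=; [rewrite (negbTE jt) | rewrite andbT].
Qed.

Lemma dext_kappaE w b t : dext (kappa w) b t =
  \sum_(i in t) (b i).+1%:R * w b t +
  \sum_(i in t) \sum_(j | (j \notin t) && (0 < b j)%N) dext_kappa_cross w b t i j.
Proof.
rewrite /dext -big_split /=; apply: eq_bigr => i it.
rewrite /kappa (bigD1 i) /=; last by rewrite setD11 /addE eqxx.
rewrite mulrDr mulr_sumr; congr (_ + _).
  by rewrite addEK setD1K // sgn_setD1_id // -mulrA [sgn R t i * _]mulrA mul_sgn mul1r.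
apply: eq_bigl => j /=; rewrite in_setD1.
case: (eqVneq j i) => [->|ji] /=; first by rewrite andbF it.
by rewrite addE_neq // andbT.
Qed.

Lemma cross_terms_cancel w b t i j : i \in t -> j \notin t ->
  kappa_dext_cross w b t j i + dext_kappa_cross w b t i j = 0.
Proof.
move=> it jt; have ij : i != j by apply: contraNneq jt => <-.
rewrite /kappa_dext_cross /dext_kappa_cross.
have -> : (j |: t) :\ i = j |: (t :\ i).
  apply/setP => l; rewrite !inE.
  by case: (eqVneq l j) => [->|] //=; rewrite eq_sym ij.
rewrite subE_neq // addE_subEC //.
rewrite sgn_setU1 // (sgn_setD1 j it) (sign_ltn_swap ij).
set e := (-1) ^+ (i < j)%N : R; set W := w _ _.
have e2 : e * e = 1 by rewrite -exprMn mulrNN mul1r expr1n.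
transitivity ((1 - e * e) * ((b i).+1%:R * sgn R t i * sgn R (t :\ i) j * W)).
  by ring.
by rewrite e2 subrr mul0r.
Qed.

Lemma mdeg_split b t : mdeg b =
  (\sum_(j | (j \notin t) && (0 < b j)%N) b j + \sum_(i in t) b i)%N.
Proof.
rewrite /mdeg (bigID (mem t)) /= addnC; congr (_ + _)%N.
rewrite [LHS](bigID (fun j => (0 < b j)%N)) /= [X in (_ + X)%N]big1 ?addn0 //.
by move=> j /andP[_]; rewrite lt0n negbK => /eqP.
Qed.

Lemma kappa_dext_add_dext_kappa w b t :
  kappa (dext w) b t + dext (kappa w) b t = (mdeg b + #|t|)%:R * w b t.
Proof.
rewrite kappa_dextE dext_kappaE addrACA [X in _ + (_ + X)]exchange_big /=.
rewrite -[X in _ + X]big_split /= [X in _ + X]big1 ?addr0 => [|j /andP[jt _]].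
  rewrite -!mulr_suml -mulrDl -!natr_sum -natrD (mdeg_split b t) -addnA.
  rewrite -sum1_card -big_split /=.
  by under [X in _ = (_ + X)%:R * _]eq_bigr do rewrite addn1.
by rewrite -big_split big1 // => i it; exact: cross_terms_cancel.
Qed.

Definition pform0 : pform R n := fun _ _ => 0.

Lemma kappa_fzero w : fzero w -> fzero (kappa w).
Proof. by move=> w0 b t; apply: big1 => j _; rewrite w0 mulr0. Qed.

Lemma dext_fzero w : fzero w -> fzero (dext w).
Proof. by move=> w0 b t; apply: big1 => j _; rewrite w0 mulr0. Qed.

Lemma kappaD w w1 w2 : (forall a s, w a s = w1 a s + w2 a s) ->
  forall b t, kappa w b t = kappa w1 b t + kappa w2 b t.
Proof. by move=> E b t; rewrite -big_split; apply: eq_bigr => j _; rewrite E mulrDr. Qed.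

Lemma dextD w w1 w2 : (forall a s, w a s = w1 a s + w2 a s) ->
  forall b t, dext w b t = dext w1 b t + dext w2 b t.
Proof. by move=> E b t; rewrite -big_split; apply: eq_bigr => j _; rewrite E mulrDr. Qed.

Lemma kappaZ (c : R) w b t : kappa (fun a s => c * w a s) b t = c * kappa w b t.
Proof. by rewrite /kappa mulr_sumr; apply: eq_bigr => j _; rewrite mulrCA. Qed.

Lemma kappa_sum (I : Type) (r : seq I) (F : I -> pform R n) w :
  (forall a s, w a s = \sum_(l <- r) F l a s) ->
  forall b t, kappa w b t = \sum_(l <- r) kappa (F l) b t.
Proof.
by move=> E b t; rewrite /kappa exchange_big; apply: eq_bigr => j _; rewrite E mulr_sumr.
Qed.

Lemma dext_sum (I : Type) (r : seq I) (F : I -> pform R n) w :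
  (forall a s, w a s = \sum_(l <- r) F l a s) ->
  forall b t, dext w b t = \sum_(l <- r) dext (F l) b t.
Proof.
by move=> E b t; rewrite /dext exchange_big; apply: eq_bigr => j _; rewrite E mulr_sumr.
Qed.

Lemma kappa_neq0 w b t : kappa w b t != 0 ->
  exists2 j, (j \notin t) && (0 < b j)%N & w (subE b j) (j |: t) != 0.
Proof.
move=> nz; have [j /andP[jP wj]|none] := pickP (fun j =>
  ((j \notin t) && (0 < b j)%N) && (w (subE b j) (j |: t) != 0)); first by exists j.
case/eqP: nz; apply: big1 => j jP.
by move/negbT: (none j); rewrite jP negbK => /eqP ->; rewrite mulr0.
Qed.

Lemma dext_neq0 w b t : dext w b t != 0 ->
  exists2 j, j \in t & w (addE b j) (t :\ j) != 0.
Proof.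
move=> nz; have [j /andP[jP wj]|none] := pickP (fun j =>
  (j \in t) && (w (addE b j) (t :\ j) != 0)); first by exists j.
case/eqP: nz; apply: big1 => j jP.
by move/negbT: (none j); rewrite jP negbK => /eqP ->; rewrite mulr0.
Qed.

Lemma mdeg_subE b j : (0 < b j)%N -> mdeg b = (mdeg (subE b j)).+1.
Proof.
move=> bj; rewrite /mdeg (bigD1 j) // [in RHS](bigD1 j) //= /subE eqxx.
by rewrite -addSn prednK //; congr (_ + _)%N; apply: eq_bigr => i /negbTE ->.
Qed.

Lemma mdeg_addE b j : mdeg (addE b j) = (mdeg b).+1.
Proof.
rewrite /mdeg (bigD1 j) // [in RHS](bigD1 j) //= /addE eqxx addSn.
by congr (_ + _)%N.+1; apply: eq_bigr => i /negbTE ->.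
Qed.

Definition homog m k w := forall a s, w a s != 0 -> mdeg a = m /\ #|s| = k.

Lemma kappa_homog m k w : homog m k.+1 w -> homog m.+1 k (kappa w).
Proof.
move=> hw b t /kappa_neq0[j /andP[jt bj] /hw[degw cardw]].
by rewrite (mdeg_subE bj) degw; move: cardw; rewrite cardsU1 jt => -[].
Qed.

Lemma dext_homog m k w : homog m.+1 k w -> homog m k.+1 (dext w).
Proof.
move=> hw b t /dext_neq0[j jt /hw[]]; rewrite mdeg_addE => -[-> cardw].
by rewrite (cardsD1 j t) jt cardw.
Qed.

Lemma inH_homog m l k w : inH m l k w -> homog m k w.
Proof. by move=> hw a s /hw[]. Qed.

Lemma homog_inP m r k w : (m <= r)%N -> homog m k w -> inP r k w.
Proof. by move=> mr hw a s /hw[-> ->]. Qed.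

Lemma kappa_inP r k w : inP r k.+1 w -> inP r.+1 k (kappa w).
Proof.
move=> pw b t /kappa_neq0[j /andP[jt bj] /pw[degw cardw]].
by rewrite (mdeg_subE bj); move: cardw; rewrite cardsU1 jt => -[].
Qed.

Lemma inP_leq r r' k w : (r <= r')%N -> inP r k w -> inP r' k w.
Proof. by move=> rr' pw a s /pw[/leq_trans->]. Qed.

Lemma addr_neq0 (x y : R) : x + y != 0 -> x != 0 \/ y != 0.
Proof. by case: (eqVneq x 0) => [->|]; [rewrite add0r; right | left]. Qed.

Lemma inP_add r k w w1 w2 : inP r k w1 -> inP r k w2 ->
  (forall a s, w a s = w1 a s + w2 a s) -> inP r k w.
Proof. by move=> p1 p2 E a s; rewrite E => /addr_neq0[/p1|/p2]. Qed.

Lemma inH_add m l k w w1 w2 : inH m l k w1 -> inH m l k w2 ->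
  (forall a s, w a s = w1 a s + w2 a s) -> inH m l k w.
Proof. by move=> h1 h2 E a s; rewrite E => /addr_neq0[/h1|/h2]. Qed.

Lemma inH_scale (c : R) m l k w : inH m l k w -> inH m l k (fun a s => c * w a s).
Proof. by move=> hw a s cw; apply: hw; apply: contraNneq cw => ->; rewrite mulr0. Qed.

Lemma inH_leq m l l' k w : (l' <= l)%N -> inH m l k w -> inH m l' k w.
Proof. by move=> ll' hw a s /hw[-> -> /(leq_trans ll')]. Qed.

Lemma inJ0 r k : inJ r k pform0.
Proof.
exists 0%N, (fun=> pform0); split=> [l /andP[l1 l0]|a s]; last by rewrite big_geq.
by move: (leq_trans l1 l0).
Qed.

Lemma inJ_widen r k w : inJ r k w -> exists m, forall M, (m <= M)%N ->
  exists f : nat -> pform R n,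
    (forall l, (1 <= l <= M)%N -> inH (r + l).-1 l k.+1 (f l)) /\
    (forall a s, w a s = \sum_(1 <= l < M.+1) kappa (f l) a s).
Proof.
case=> m [f [fH wE]]; exists m => M mM.
exists (fun l => if (l <= m)%N then f l else pform0); split.
  move=> l /andP[l1 lM]; case: ifP => lm; first by apply: fH; rewrite l1.
  by move=> a s; rewrite eqxx.
move=> a s; rewrite wE [RHS](@big_cat_nat _ _ _ m.+1) ?ltnS //=.
rewrite [X in _ + X]big1_seq ?addr0.
  by apply: eq_big_nat => l /andP[_]; rewrite ltnS => ->.
move=> l /andP[_]; rewrite mem_index_iota ltnNge => /andP[/negbTE-> _].
exact: kappa_fzero.
Qed.

Lemma inJ_add r k w w1 w2 : inJ r k w1 -> inJ r k w2 ->
  (forall a s, w a s = w1 a s + w2 a s) -> inJ r k w.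
Proof.
move=> /inJ_widen[m1 J1] /inJ_widen[m2 J2] E.
have [f1 [H1 E1]] := J1 _ (leq_maxl m1 m2).
have [f2 [H2 E2]] := J2 _ (leq_maxr m1 m2).
exists (maxn m1 m2), (fun l a s => f1 l a s + f2 l a s); split.
  by move=> l lM; apply: inH_add (H1 l lM) (H2 l lM) _.
move=> a s; rewrite E E1 E2 -big_split; apply: eq_bigr => l _.
by rewrite [RHS](kappaD (w1 := f1 l) (w2 := f2 l)).
Qed.

(* The summand l = 1 of J_r is homogeneous of degree r + 1; the others
   re-index into J_(r+1). *)
Lemma inJ_split r k w : inJ r k w -> exists q w',
  [/\ homog r.+1 k q, inJ r.+1 k w' & forall a s, w a s = q a s + w' a s].
Proof.
case=> -[|m] [f [fH wE]].
  exists pform0, w; split=> [a s||a s]; last by rewrite add0r.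
  - by rewrite eqxx.
  - by exists 0%N, f; split=> // l /andP[l1 l0]; move: (leq_trans l1 l0).
exists (kappa (f 1%N)), (fun a s => \sum_(1 <= l < m.+1) kappa (f l.+1) a s).
split=> [||a s]; last by rewrite wE big_nat_recl.
- by have := fH 1%N isT; rewrite addn1 => /inH_homog/kappa_homog.
- exists m, (fun l => f l.+1); split=> // l lm.
  apply: inH_leq (leqnSn l) _; rewrite addSn -addnS; apply: fH.
  by case/andP: lm.
Qed.

Lemma kappa_inJ r k w : inJ r k w -> fzero (kappa w).
Proof.
case=> m [f [_ wE]] b t; rewrite (kappa_sum wE) big1 // => l _.
exact: kappa_kappa.
Qed.

Lemma kappa_dext_kappa m k w b t : homog m k.+1 w ->
  kappa (dext (kappa w)) b t = (m.+1 + k)%:R * kappa w b t.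
Proof.
move=> hw; apply: (addIr (dext (kappa (kappa w)) b t)).
rewrite kappa_dext_add_dext_kappa (dext_fzero (kappa_kappa w)) addr0.
have [->|nz] := eqVneq (kappa w b t) 0; first by rewrite !mulr0.
by have [-> ->] := kappa_homog hw nz.
Qed.

Lemma kappa_dext_inJ r k w : inJ r k w -> inJ r k (kappa (dext w)).
Proof.
case=> m [f [fH wE]].
exists m, (fun l a s => ((r + l).-1.+1 + k)%:R * f l a s); split.
  by move=> l lm; apply/inH_scale/fH.
move=> b t; rewrite (kappa_sum (dext_sum wE)).
apply: eq_big_nat => l lm; rewrite kappaZ.
exact/kappa_dext_kappa/inH_homog/fH.
Qed.

Lemma inS0 r k : inS r k pform0.
Proof.
exists pform0, pform0, pform0; split=> [a s|||a s].
- by rewrite eqxx.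
- exact: inJ0.
- by case: k => [|k]; [move=> a s | exact: inJ0].
- by rewrite (dext_fzero (w := pform0)) ?addr0.
Qed.

Lemma inS_add r k w u v : inS r k u -> inS r k v ->
  (forall a s, w a s = u a s + v a s) -> inS r k w.
Proof.
case=> [p1 [j1 [g1 [P1 J1 G1 E1]]]] [p2 [j2 [g2 [P2 J2 G2 E2]]]] E.
exists (fun a s => p1 a s + p2 a s), (fun a s => j1 a s + j2 a s),
  (fun a s => g1 a s + g2 a s); split.
- exact: inP_add P1 P2 _.
- exact: inJ_add J1 J2 _.
- case: k G1 G2 {P1 P2 J1 J2 E1 E2 E} => [|k] G1 G2; last exact: inJ_add G1 G2 _.
  by move=> a s; rewrite G1 G2 addr0.
- by move=> a s; rewrite E E1 E2 [in RHS](dextD (w1 := g1) (w2 := g2)) //; ring.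
Qed.

Lemma inS_succ r k w : inS r k w -> inS r.+1 k w.
Proof.
case=> p [j [g [pP jJ gJ wE]]].
have [q1 [j1 [q1H j1J jE]]] := inJ_split jJ.
case: k pP jJ gJ wE q1H j1J jE => [|k] pP jJ gJ wE q1H j1J jE.
  exists (fun a s => p a s + q1 a s), j1, g; split=> //.
  - exact: inP_add (inP_leq (leqnSn r) pP) (homog_inP (leqnn _) q1H) _.
  - by move=> a s; rewrite wE jE addrA.
have [q2 [g2 [q2H g2J gE]]] := inJ_split gJ.
exists (fun a s => p a s + q1 a s + dext q2 a s), j1, g2; split=> //.
- apply: inP_add (homog_inP (leqnn _) (dext_homog q2H)) _ => //.
  exact: inP_add (inP_leq (leqnSn r) pP) (homog_inP (leqnn _) q1H) _.
- by move=> a s; rewrite wE jE (dextD gE); ring.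
Qed.

Lemma kappa_inS r k v : inS r k.+1 v -> inS r.+1 k (kappa v).
Proof.
case=> p [j [g [pP jJ gJ vE]]].
exists (kappa p), (kappa (dext g)), pform0; split.
- exact: kappa_inP.
- exact: kappa_dext_inJ.
- by case: k {pP jJ gJ vE} => [|k]; [move=> a s | exact: inJ0].
move=> b t; rewrite (dext_fzero (w := pform0)) // addr0 (kappaD vE).
by rewrite (kappaD (w1 := p) (w2 := j)) // (kappa_inJ jJ) addr0.
Qed.

End Forms.

Theorem mainTheorem1 (R : realFieldType) (n r k : nat) :
  (1 <= n)%N -> (1 <= r)%N -> (k <= n)%N ->
  (forall w : pform R n, inS r k w -> inStrim r.+1 k w) /\
  (forall w : pform R n, inStrim r.+1 k w -> inS r.+1 k w).
Proof.
move=> _ _ _; split=> [w wS | w [u [v [uS vS wE]]]].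
  exists w, (@pform0 R n); split=> //; first exact: inS0.
  by move=> a s; rewrite (kappa_fzero (w := (@pform0 R n))) ?addr0.
exact: inS_add (inS_succ uS) (kappa_inS vS) wE.
Qed.
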